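(* For $n\ge5$, the symmetric space $\mathrm{SL}_{n+1}\mathbb R/\mathrm{SO}(n+1)$ has property $\mathbf E$.
   Context: Property $\mathbf E$ for a symmetric space $X$ of noncompact type: for every $x\in X$ with stabilizer $K$ (in the identity component of the isometry group) and every maximal flat through $x$ with tangent space $\mathcal F\subset T_xX$, putting $r=\mathrm{rank}(X)$, for any basis $\{v_1,\dots,v_r\}$ of $\mathcal F$ there is an orthonormal $3r$-frame $v_1',v_1'',v_1''',\dots,v_r',v_r'',v_r'''$ of $T_xX$ with $\mathrm{span}\{v_i',v_i'',v_i'''\}\subset(\mathrm{span}\{K_i\cdot\mathcal F\})^\perp$ for each $i$, where $K_i$ is the stabilizer of $v_i$ in $K$ acting by derivatives. *)

From HB Require Import structures.
From mathcomp Require Import all_boot all_order all_algebra.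
From mathcomp Require Import reals.
Set Implicit Arguments.
Unset Strict Implicit.
Unset Printing Implicit Defensive.
Import Order.TTheory GRing.Theory Num.Theory.
Local Open Scope ring_scope.

(* Model of the symmetric space X = SL_m(R)/SO(m):
   X = { P : m x m symmetric positive definite, det P = 1 },
   SL_m(R) acting by g . P = g P g^T (this action factors through the identity
   component PSL_m(R) of Isom(X)). *)
Section SLSO.
Variables (R : realType) (m : nat).

Definition symmx (A : 'M[R]_m) : Prop := A^T = A.

Definition posdefmx (P : 'M[R]_m) : Prop :=
  symmx P /\ forall v : 'rV[R]_m, v != 0 -> 0 < (v *m P *m v^T) 0 0.

Definition SLSO_point (P : 'M[R]_m) : Prop := posdefmx P /\ \det P = 1.

Definition SLSO_tangent (P V : 'M[R]_m) : Prop :=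
  symmx V /\ \tr (invmx P *m V) = 0.

Definition SLSO_metric (P V W : 'M[R]_m) : R :=
  \tr (invmx P *m V *m invmx P *m W).

(* derivative action of g on tangent vectors (and action on points) *)
Definition SLSO_act (g V : 'M[R]_m) : 'M[R]_m := g *m V *m g^T.

Definition SLSO_stab (P g : 'M[R]_m) : Prop := \det g = 1 /\ SLSO_act g P = P.

(* A subspace F of T_P X is abelian (Lie bracket vanishes after translating
   P to the base point: [P^{-1/2} V P^{-1/2}, P^{-1/2} W P^{-1/2}] = 0). *)
Definition SLSO_abelian (P : 'M[R]_m) (F : {vspace 'M[R]_m}) : Prop :=
  (forall V, V \in F -> SLSO_tangent P V) /\
  (forall V W, V \in F -> W \in F ->
     V *m invmx P *m W = W *m invmx P *m V).

(* tangent spaces at P of maximal flats through P = maximal abelian subspaces *)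
Definition SLSO_maxflat_tangent (P : 'M[R]_m) (F : {vspace 'M[R]_m}) : Prop :=
  SLSO_abelian P F /\
  (forall F' : {vspace 'M[R]_m}, SLSO_abelian P F' -> (F <= F')%VS -> F' = F).

(* Property E for X = SL_m(R)/SO(m).  The rank r is dim F (all maximal flats
   have dimension rank X).  The 3r-frame is e i a, i : 'I_r, a : 'I_3. *)
Definition property_E_SLSO : Prop :=
  forall P : 'M[R]_m, SLSO_point P ->
  forall F : {vspace 'M[R]_m}, SLSO_maxflat_tangent P F ->
  forall vs : (\dim F).-tuple 'M[R]_m, basis_of F vs ->
  exists e : 'I_(\dim F) -> 'I_3 -> 'M[R]_m,
    [/\ (forall i a, SLSO_tangent P (e i a)),
        (forall i a j b, SLSO_metric P (e i a) (e j b) =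
                          if (i == j) && (a == b) then 1 else 0) &
        (forall i a (k W : 'M[R]_m),
           SLSO_stab P k -> SLSO_act k (tnth vs i) = tnth vs i ->
           W \in F -> SLSO_metric P (e i a) (SLSO_act k W) = 0)].

End SLSO.

From HB Require Import structures.
From mathcomp Require Import all_boot all_order all_algebra.
From mathcomp Require Import reals perm complex.
From mathcomp Require Import ring.
Set Implicit Arguments.
Unset Strict Implicit.
Unset Printing Implicit Defensive.
Import Order.TTheory GRing.Theory Num.Theory.
Local Open Scope ring_scope.

(* Let v_1, ..., v_r be the basis of the flat F at P.  The v_i commute
   through P^-1, so one congruence U with U P U^T = 1 diagonalises all of them:
   U v_i U^T = diag(lambda_i).  After this congruence, a tangent vector
   commuting with v_i becomes a matrix commuting with diag(lambda_i), hence it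
   vanishes at every entry (p, q) with lambda_i(p) <> lambda_i(q); as K_i fixes
   P and v_i, the whole of K_i F consists of such vectors.  So the normalised
   symmetric elementary matrix at such a pair (p, q), pulled back by U, is a
   unit tangent vector orthogonal to K_i F, and two of them are orthogonal when
   their unordered pairs differ.

   It remains to choose, for each i, three pairs with lambda_i(p) <>
   lambda_i(q), all 3r unordered pairs being distinct.  The rows lambda_i are
   linearly independent and sum to zero (tangent vectors are traceless), so
   their differences along the edges of a spanning tree of {0, ..., n} form a
   matrix of full row rank, which has a transversal of non-zero entries.  For
   n >= 5 the complete graph on {0, ..., n} has three edge-disjoint spanning
   trees, and one transversal for each of them gives the pairs. *)

(** * Three edge-disjoint spanning trees *)

Definition same_edge (T : eqType) (e f : T * T) : bool :=
  (e == f) || ((e.2, e.1) == f).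

(* Three edge-disjoint Hamiltonian paths of the complete graph on {0,...,5}. *)
Definition hamilton_path (c k : nat) : nat :=
  (nth 0 (nth [::] [:: [:: 0; 1; 5; 2; 4; 3]; [:: 1; 2; 0; 3; 5; 4];
                       [:: 2; 3; 1; 4; 0; 5]] c) k)%N.

(* The c-th spanning tree of {0,...,n}: the c-th path plus the edges c -- v,
   v > 5. *)
Definition tree_edge (c j : nat) : nat * nat :=
  if (j < 5)%N then (hamilton_path c j, hamilton_path c j.+1) else (c, j.+1).

Lemma hamilton_path_le c k : (hamilton_path c k <= 5)%N.
Proof.
rewrite /hamilton_path; case: c => [|[|[|c]]]; rewrite /= ?nth_nil //;
by case: k => [|[|[|[|[|[|k]]]]]]; rewrite /= ?nth_nil.
Qed.

Lemma tree_edge_le n c j : (5 <= n)%N -> (c < 3)%N -> (j < n)%N ->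
  ((tree_edge c j).1 <= n)%N && ((tree_edge c j).2 <= n)%N.
Proof.
move=> n5 c3 jn; rewrite /tree_edge; case: ifP => _ /=.
  by rewrite !(leq_trans (hamilton_path_le _ _) n5).
by rewrite jn andbT (leq_trans _ n5) // ltnW // (leq_trans c3).
Qed.

Lemma tree_edge_inj c d j k : (c < 3)%N -> (d < 3)%N ->
  same_edge (tree_edge c j) (tree_edge d k) -> (c == d) && (j == k).
Proof.
rewrite /same_edge /tree_edge => c3 d3.
have le5 := hamilton_path_le.
have [j5|j5] := ltnP j 5; have [k5|k5] := ltnP k 5.
- move: c3 d3 j5 k5 {le5}.
  by case: c => [|[|[|c]]] //; case: d => [|[|[|d]]] //;
    case: j => [|[|[|[|[|j]]]]] //; case: k => [|[|[|[|[|k]]]]].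
- rewrite !xpair_eqE /=; case/orP => /andP[/eqP e1 /eqP e2].
    by have := le5 c j.+1; rewrite e2 ltnNge k5.
  by have := le5 c j; rewrite e2 ltnNge k5.
- rewrite !xpair_eqE /=; case/orP => /andP[/eqP e1 /eqP e2].
    by have := le5 d k.+1; rewrite -e2 ltnNge j5.
  by have := le5 d k; rewrite -e1 ltnNge j5.
- rewrite !xpair_eqE /= eqSS => /orP[/andP[-> ->] //|/andP[/eqP e _]].
  by have := ltn_trans d3 (isT : 3 < 6)%N; rewrite -e ltnS ltnNge j5.
Qed.

Lemma tree_edge_spanning (T : Type) (mu : nat -> T) n c :
  (5 <= n)%N -> (c < 3)%N ->
  (forall j, (j < n)%N -> mu (tree_edge c j).1 = mu (tree_edge c j).2) ->
  forall a, (a <= n)%N -> mu a = mu c.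
Proof.
move=> n5 c3 edge a an.
have path j : (j < 5)%N -> mu (hamilton_path c j) = mu (hamilton_path c j.+1).
  by move=> j5; have := edge j (leq_trans j5 n5); rewrite /tree_edge j5.
have [a6|a6] := ltnP a 6.
  have p0 := path 0%N isT; have p1 := path 1%N isT; have p2 := path 2%N isT.
  have p3 := path 3%N isT; have p4 := path 4%N isT; clear path edge.
  move: p0 p1 p2 p3 p4; rewrite /hamilton_path.
  by case: c c3 => [|[|[|]]] // _;
    case: a an a6 => [|[|[|[|[|[|]]]]]] // _ _ /= *; congruence.
case: a an a6 => // a an a5.
by have := edge a an; rewrite /tree_edge ltnNge -ltnS a5 /= => ->.
Qed.

(** * Transversals of edge-difference matrices *)

Lemma row_free_transversal (F : fieldType) r k (M : 'M[F]_(r, k)) :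
  row_free M ->
  exists s : 'I_r -> 'I_k, injective s /\ forall i, M i (s i) != 0.
Proof.
move=> freeM; have fullMT : row_full M^T by rewrite /row_full mxrank_tr.
have := fullrowsub_unit fullMT; set f := fullrankfun fullMT => detM.
have f_inj : injective f := @fullrankfun_inj _ _ _ _ fullMT.
(* a non-zero term of the Leibniz expansion of a non-zero minor *)
have [s] : exists s : 'S_r, (-1) ^+ s * \prod_i (rowsub f M^T) i (s i) != 0.
  apply/existsP; apply: contraLR detM; rewrite negb_exists => /forallP s0.
  by rewrite unitmxE unitfE negbK; apply/eqP/big1 => s _; apply/eqP/negbNE.
rewrite mulf_eq0 negb_or => /andP[_ /prodf_neq0 nz].
exists (fun i => f ((s^-1)%g i)); split=> [i j /f_inj /perm_inj //|i].
by have := nz ((s^-1)%g i) isT; rewrite !mxE permKV.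
Qed.

Section EdgeDifferences.
Variables (F : numFieldType) (r m k : nat).
Variables (lam : 'M[F]_(r, m.+1)) (e : 'I_k -> 'I_m.+1 * 'I_m.+1).

Definition edge_diffmx : 'M[F]_(r, k) :=
  \matrix_(i, j) (lam i (e j).1 - lam i (e j).2).

Lemma edge_diffmx_row_free :
  row_free lam -> (forall i, \sum_a lam i a = 0) ->
  (forall mu : 'I_m.+1 -> F, (forall j, mu (e j).1 = mu (e j).2) ->
     forall a, mu a = mu ord0) ->
  row_free edge_diffmx.
Proof.
move=> freeL sum0 connected; apply: inj_row_free => x xM0.
apply: (row_free_inj freeL); rewrite mul0mx.
set mu := x *m lam.
have mu_const a : mu 0 a = mu 0 ord0.
  apply: (connected (mu 0)) => j.
  apply/eqP; rewrite -subr_eq0; apply/eqP.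
  transitivity ((x *m edge_diffmx) 0 j); last by rewrite xM0 mxE.
  by rewrite !mxE -sumrB; apply: eq_bigr => i _; rewrite !mxE mulrBr.
have mu0 : mu 0 ord0 = 0.
  have : \sum_a mu 0 a = 0.
    rewrite (eq_bigr (fun a => \sum_i x 0 i * lam i a)) => [|a _]; last first.
      by rewrite mxE.
    by rewrite exchange_big big1 // => i _; rewrite -mulr_sumr sum0 mulr0.
  rewrite (eq_bigr (fun=> mu 0 ord0)) ?sumr_const ?card_ord // -mulr_natl.
  by move/eqP; rewrite mulf_eq0 pnatr_eq0 => /eqP.
by apply/rowP => a; rewrite mu_const mu0 mxE.
Qed.

End EdgeDifferences.

Section ThreeTrees.
Variable n : nat.
Hypothesis n5 : (5 <= n)%N.

Definition tree_ord (c : 'I_3) (j : 'I_n) : 'I_n.+1 * 'I_n.+1 :=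
  (inord (tree_edge c j).1, inord (tree_edge c j).2).

Lemma tree_ord_spanning (T : Type) (c : 'I_3) (mu : 'I_n.+1 -> T) :
  (forall j, mu (tree_ord c j).1 = mu (tree_ord c j).2) ->
  forall a, mu a = mu ord0.
Proof.
move=> edge a; pose nu k := mu (inord k).
have nu_c k : (k <= n)%N -> nu k = nu c.
  by apply: tree_edge_spanning => // j jn; apply: (edge (Ordinal jn)).
have nu0 : mu ord0 = nu 0%N.
  by rewrite /nu; congr mu; apply/val_inj; rewrite /= inordK.
by rewrite -(inord_val a) -/(nu a) nu0 (nu_c a (ltn_ord a)) (nu_c 0%N).
Qed.

Lemma tree_ord_inj c d j k :
  same_edge (tree_ord c j) (tree_ord d k) -> (c == d) && (j == k).
Proof.
have le (c' : 'I_3) (j' : 'I_n) := tree_edge_le n5 (ltn_ord c') (ltn_ord j').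
have inordE a b : (a <= n)%N -> (b <= n)%N ->
    (inord a == inord b :> 'I_n.+1) = (a == b).
  by move=> an bn; rewrite -val_eqE /= !inordK.
move: (le c j) (le d k) => /andP[c1 c2] /andP[d1 d2].
rewrite /same_edge !xpair_eqE /= !inordE //.
move=> /(tree_edge_inj (ltn_ord c) (ltn_ord d)).
by rewrite !val_eqE.
Qed.

Lemma three_separating_edge_families (F : numFieldType) r
    (lam : 'M[F]_(r, n.+1)) :
  row_free lam -> (forall i, \sum_a lam i a = 0) ->
  exists pq : 'I_r -> 'I_3 -> 'I_n.+1 * 'I_n.+1,
    (forall i c, lam i (pq i c).1 != lam i (pq i c).2) /\
    (forall i c j d, same_edge (pq i c) (pq j d) -> (i == j) && (c == d)).
Proof.
move=> freeL sum0.
have /fin_all_exists[s sP] (c : 'I_3) : exists s : 'I_r -> 'I_n,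
    injective s /\ forall i, edge_diffmx lam (tree_ord c) i (s i) != 0.
  apply/row_free_transversal/edge_diffmx_row_free => // mu.
  exact: tree_ord_spanning.
exists (fun i c => tree_ord c (s c i)); split=> [i c|i c j d].
  by have := (sP c).2 i; rewrite mxE subr_eq0.
move=> /tree_ord_inj /andP[/eqP cd]; subst d.
by rewrite eqxx andbT => /eqP/(sP c).1 ->.
Qed.

End ThreeTrees.

(** * Simultaneous diagonalisation by congruence *)

Lemma trmx_sandwich (F : comPzRingType) m n k (A : 'M[F]_(m, n)) (M : 'M[F]_n)
    (B : 'M[F]_(k, n)) :
  (A *m M *m B^T)^T = B *m M^T *m A^T.
Proof. by rewrite !trmx_mul trmxK mulmxA. Qed.

Lemma col_sandwich (F : pzRingType) n k (x : 'rV[F]_n) (Y : 'M[F]_(k, n)) M :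
  col_mx x Y *m M *m (col_mx x Y)^T =
  block_mx (x *m M *m x^T) (x *m M *m Y^T) (Y *m M *m x^T) (Y *m M *m Y^T).
Proof. by rewrite tr_col_mx mul_col_mx mul_col_row. Qed.

Lemma row_free_annihilator (F : fieldType) n (c : 'cV[F]_n.+1) : c != 0 ->
  exists2 Y : 'M[F]_(n, n.+1), row_free Y & Y *m c = 0.
Proof.
move=> c0; have rankK : \rank (kermx c) = n.
  rewrite mxrank_ker; suff -> : \rank c = 1%N by rewrite subn1.
  by apply/eqP; rewrite eqn_leq rank_leq_col lt0n mxrank_eq0.
exists (castmx (rankK, erefl) (row_base (kermx c))).
  by rewrite row_free_castmx row_base_free.
by apply/sub_kermxP; rewrite eqmx_cast eq_row_base.
Qed.

Lemma col_mx_row_free (F : fieldType) n k (x : 'rV[F]_n) (Y : 'M[F]_(k, n)) c :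
  x *m c = 1%:M -> Y *m c = 0 -> row_free Y -> row_free (col_mx x Y).
Proof.
move=> xc Yc freeY; apply: inj_row_free => v.
rewrite -[v]hsubmxK mul_row_col => vxY.
have v1 : lsubmx v = 0.
  have := congr1 (mulmx^~ c) vxY.
  by rewrite mulmxDl -!mulmxA xc Yc mulmx1 mulmx0 addr0 mul0mx.
move: vxY; rewrite v1 mul0mx add0r => /eqP; rewrite mulmx_free_eq0 // => /eqP->.
by rewrite row_mx0.
Qed.

Lemma invmx_deflate (F : fieldType) n (P : 'M[F]_n.+1) (x : 'rV_n.+1)
    (Y : 'M_(n, n.+1)) :
  P \in unitmx -> Y *m P *m Y^T \in unitmx -> row_free (col_mx x Y) ->
  x *m P *m x^T = 1%:M -> x *m P *m Y^T = 0 -> Y *m P *m x^T = 0 ->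
  invmx P = x^T *m x + Y^T *m invmx (Y *m P *m Y^T) *m Y.
Proof.
move=> Pu P2u freeU xPx xPY YPx; set Z := _ + _.
have Uu : (col_mx x Y : 'M_n.+1)^T \in unitmx.
  by rewrite unitmx_tr -row_free_unit.
have ZPU : Z *m P *m (col_mx x Y)^T = (col_mx x Y)^T.
  rewrite tr_col_mx mul_mx_row /Z; congr row_mx; rewrite !mulmxDl -!mulmxA.
    by rewrite (mulmxA x) xPx (mulmxA Y P x^T) YPx !mulmx0 addr0 mulmx1.
  rewrite (mulmxA x) xPY !(mulmxA Y P) mulVmx //.
  by rewrite mulmx0 add0r mulmx1.
have ZP : Z *m P = 1%:M.
  have := congr1 (mulmx^~ (invmx (col_mx x Y)^T)) ZPU.
  by rewrite /= mulmxK // mulmxV.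
by rewrite -[Z]mulmx1 -(mulmxV Pu) mulmxA ZP mul1mx.
Qed.

Section CongruenceDiagonalisation.
Variable R : realType.
Local Notation rc := (real_complex R).
Local Notation CRe := (@complex.Re R).
Local Notation CIm := (@complex.Im R).

Definition mxform m (u : 'rV[R]_m) (M : 'M[R]_m) (w : 'rV[R]_m) : R :=
  (u *m M *m w^T) 0 0.

Lemma mxform_sym m (u w : 'rV[R]_m) M : symmx M -> mxform u M w = mxform w M u.
Proof.
move=> symM; rewrite /mxform -[in RHS]symM -trmx_sandwich.
by rewrite [in RHS]mxE.
Qed.

Lemma posdefmx_ge0 m (P : 'M[R]_m) v : posdefmx P -> 0 <= mxform v P v.
Proof.
case=> _ posP; have [->|v0] := eqVneq v 0; last exact/ltW/posP.
by rewrite /mxform !mul0mx mxE.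
Qed.

Lemma posdefmx_unit m (P : 'M[R]_m) : posdefmx P -> P \in unitmx.
Proof.
case=> _ posP; rewrite -row_free_unit; apply: inj_row_free => v vP0.
apply/eqP/contraT => /(posP v).
by rewrite vP0 mul0mx mxE ltxx.
Qed.

Lemma posdefmx_congr m k (P : 'M[R]_m) (Y : 'M[R]_(k, m)) :
  posdefmx P -> row_free Y -> posdefmx (Y *m P *m Y^T).
Proof.
move=> [symP posP] freeY; split; first by rewrite /symmx trmx_sandwich symP.
move=> v v0; rewrite !mulmxA -mulmxA -trmx_mul; apply: posP.
by rewrite mulmx_free_eq0.
Qed.

Lemma map_Re_mulmx n k (z : 'rV[R[i]]_n) (M : 'M[R]_(n, k)) :
  map_mx CRe (z *m map_mx rc M) = map_mx CRe z *m M.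
Proof.
apply/rowP => j; rewrite !mxE; elim/big_rec2: _ => [|l y1 y2 _ <-] //=.
by rewrite !mxE; case: (z 0 l) => a b; case: y2 => ? ? /=; rewrite mulr0 subr0.
Qed.

Lemma map_Im_mulmx n k (z : 'rV[R[i]]_n) (M : 'M[R]_(n, k)) :
  map_mx CIm (z *m map_mx rc M) = map_mx CIm z *m M.
Proof.
apply/rowP => j; rewrite !mxE; elim/big_rec2: _ => [|l y1 y2 _ <-] //=.
by rewrite !mxE; case: (z 0 l) => a b; case: y2 => ? ? /=; rewrite mulr0 add0r.
Qed.

Lemma map_Re_scale n (a : R[i]) (z : 'rV[R[i]]_n) :
  map_mx CRe (a *: z) = CRe a *: map_mx CRe z - CIm a *: map_mx CIm z.
Proof. by apply/rowP => j; rewrite !mxE; case: a; case: (z 0 j). Qed.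

Lemma map_Im_scale n (a : R[i]) (z : 'rV[R[i]]_n) :
  map_mx CIm (a *: z) = CIm a *: map_mx CRe z + CRe a *: map_mx CIm z.
Proof.
apply/rowP => j; rewrite !mxE.
by case: a; case: (z 0 j) => ? ? ? ? /=; rewrite addrC.
Qed.

Lemma generalized_eigenvalue_real n (P V : 'M[R]_n) (x y : 'rV[R]_n) (s t : R) :
  posdefmx P -> symmx V -> (x != 0) || (y != 0) ->
  x *m V = s *: (x *m P) - t *: (y *m P) ->
  y *m V = t *: (x *m P) + s *: (y *m P) -> t = 0.
Proof.
move=> posP symV xy0 xV yV.
have : t * (mxform x P x + mxform y P y) = 0.
  have := mxform_sym x y symV; rewrite /mxform xV yV.
  rewrite !(mulmxBl, mulmxDl, =^~ scalemxAl).
  have da : (y *m P *m x^T) 0 0 = (x *m P *m y^T) 0 0 := mxform_sym _ _ posP.1.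
  move: da; set a := x *m P *m y^T; set b := y *m P *m y^T.
  set c := x *m P *m x^T; set d := y *m P *m x^T; clearbody a b c d.
  rewrite !mxE => -> e.
  transitivity ((t * c 0 0 + s * a 0 0) - (s * a 0 0 - t * b 0 0)).
    by ring.
  by rewrite e subrr.
move/eqP; rewrite mulf_eq0 paddr_eq0 ?posdefmx_ge0 // => /orP[/eqP //|].
by case/orP: xy0 => /(posP.2 _) /gt_eqF ->; rewrite ?andbF.
Qed.

Definition comm_symmx_family m (P : 'M[R]_m) (Vs : seq 'M[R]_m) : Prop :=
  [/\ posdefmx P, {in Vs, forall V, symmx V} &
      {in Vs &, forall V W, V *m invmx P *m W = W *m invmx P *m V}].

Lemma common_generalized_eigenvector n (P : 'M[R]_n.+1) Vs :
  comm_symmx_family P Vs ->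
  exists2 u : 'rV_n.+1, u != 0 &
    {in Vs, forall V, exists l, u *m V = l *: (u *m P)}.
Proof.
(* The commuting V P^-1 have a common eigenvector z over R[i]; their eigenvalues
   are real by symmetry, so Re z or Im z will do. *)
move=> [posP symV commV]; have Pu := posdefmx_unit posP.
pose Bs := [seq map_mx rc (V *m invmx P) | V <- Vs].
have [|z z0 zB] := @common_eigenvector _ _ Bs (ltn0Sn n).
  move=> _ _ /mapP[V VVs ->] /mapP[W WVs ->].
  by rewrite /comm_mx -!map_mxM !mulmxA commV.
pose x := map_mx CRe z; pose y := map_mx CIm z.
have xy0 : (x != 0) || (y != 0).
  apply: contraNT z0; rewrite negb_or !negbK => /andP[/eqP x0 /eqP y0].
  apply/eqP/rowP => j; have /rowP/(_ j) := x0; have /rowP/(_ j) := y0.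
  by rewrite !mxE; case: (z 0 j) => a b /= -> ->.
have eig V : V \in Vs ->
    exists l, x *m V = l *: (x *m P) /\ y *m V = l *: (y *m P).
  move=> VVs; have /sub_rVP[a za] : stablemx z (map_mx rc (V *m invmx P)).
    by apply: (allP zB); apply: map_f.
  have zV : z *m map_mx rc V = a *: (z *m map_mx rc P).
    by rewrite scalemxAl -za -mulmxA -map_mxM mulmxKV.
  have xV : x *m V = CRe a *: (x *m P) - CIm a *: (y *m P).
    by rewrite -map_Re_mulmx zV map_Re_scale map_Re_mulmx map_Im_mulmx.
  have yV : y *m V = CIm a *: (x *m P) + CRe a *: (y *m P).
    by rewrite -map_Im_mulmx zV map_Im_scale map_Re_mulmx map_Im_mulmx.
  have a_real := generalized_eigenvalue_real posP (symV V VVs) xy0 xV yV.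
  by exists (CRe a); rewrite xV yV a_real !scale0r subr0 add0r.
by case/orP: xy0 => [x0|y0]; [exists x | exists y] => // V /eig[l []]; exists l.
Qed.

Lemma comm_symmx_family_deflate n (P : 'M[R]_n.+1) Vs :
  comm_symmx_family P Vs ->
  exists (x : 'rV_n.+1) (Y : 'M_(n, n.+1)),
  [/\ x *m P *m x^T = 1%:M, x *m P *m Y^T = 0, Y *m P *m x^T = 0,
      {in Vs, forall V, x *m V *m Y^T = 0 /\ Y *m V *m x^T = 0} &
      comm_symmx_family (Y *m P *m Y^T) [seq Y *m V *m Y^T | V <- Vs]].
Proof.
move=> fam; have [posP symV commV] := fam; have Pu := posdefmx_unit posP.
have [u u0 eigu] := common_generalized_eigenvector fam.
have uPu : 0 < mxform u P u := posP.2 u u0.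
pose x := (Num.sqrt (mxform u P u))^-1 *: u.
have xPx : x *m P *m x^T = 1%:M.
  rewrite linearZ -!scalemxAl -scalemxAr scalerA [_ *m u^T]mx11_scalar.
  by rewrite scale_scalar_mx -expr2 exprVn sqr_sqrtr ?ltW // mulVf ?gt_eqF.
have Px0 : P *m x^T != 0.
  apply/eqP => Px0; move/matrixP/(_ 0 0): xPx.
  by rewrite -mulmxA Px0 mulmx0 !mxE /= => /eqP; rewrite eq_sym oner_eq0.
have [Y freeY /[!mulmxA] YPx] := row_free_annihilator Px0.
have xPY : x *m P *m Y^T = 0.
  by rewrite -[LHS]trmxK trmx_sandwich posP.1 YPx trmx0.
have xVY V : V \in Vs -> x *m V *m Y^T = 0.
  move=> /eigu[l uV]; have xV : x *m V = l *: (x *m P).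
    by rewrite /x -!scalemxAl uV !scalerA mulrC.
  by rewrite xV -scalemxAl xPY scaler0.
have YVx V : V \in Vs -> Y *m V *m x^T = 0.
  by move=> VVs; rewrite -[LHS]trmxK trmx_sandwich symV // xVY ?trmx0.
have posP2 := posdefmx_congr posP freeY.
have invP : invmx P = x^T *m x + Y^T *m invmx (Y *m P *m Y^T) *m Y.
  apply: (invmx_deflate Pu (posdefmx_unit posP2) _ xPx xPY YPx).
  by apply: (@col_mx_row_free _ _ _ _ _ (P *m x^T)); rewrite ?mulmxA.
have reduce V W : V \in Vs ->
    Y *m V *m Y^T *m invmx (Y *m P *m Y^T) *m (Y *m W *m Y^T) =
    Y *m (V *m invmx P *m W) *m Y^T.
  by move=> VVs; rewrite invP !(mulmxDl, mulmxDr) !mulmxA YVx // !mul0mx add0r.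
exists x, Y; split=> // [V VVs|]; first by rewrite xVY ?YVx.
split=> // [_ /mapP[V VVs ->]|_ _ /mapP[V VVs ->] /mapP[W WVs ->]].
  by rewrite /symmx trmx_sandwich symV.
by rewrite !reduce // commV.
Qed.

Theorem simultaneous_congruence_diag n (P : 'M[R]_n) Vs :
  comm_symmx_family P Vs ->
  exists U : 'M[R]_n,
    U *m P *m U^T = 1%:M /\ {in Vs, forall V, is_diag_mx (U *m V *m U^T)}.
Proof.
elim: n P Vs => [|n IH] P Vs fam.
  exists 1%:M; split=> [|V _]; first by apply/matrixP => [] [].
  by apply/is_diag_mxP => [] [].
have [x [Y [xPx xPY YPx xVY /IH[U2 [U2P U2V]]]]] :=
  comm_symmx_family_deflate fam.
have sandwich M : col_mx x (U2 *m Y) *m M *m (col_mx x (U2 *m Y))^T =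
    block_mx (x *m M *m x^T) (x *m M *m Y^T *m U2^T)
             (U2 *m (Y *m M *m x^T)) (U2 *m (Y *m M *m Y^T) *m U2^T).
  by rewrite col_sandwich trmx_mul !mulmxA.
exists (col_mx x (U2 *m Y)); split=> [|V VVs].
  by rewrite [LHS]sandwich xPx xPY YPx U2P mul0mx mulmx0 -scalar_mx_block.
rewrite sandwich; have [-> ->] := xVY V VVs; rewrite mul0mx mulmx0.
rewrite -[n.+1]/(1 + n)%N is_diag_block_mx // !eqxx /=; apply/andP; split.
  exact: mx11_is_diag.
by apply: U2V; apply: map_f.
Qed.

End CongruenceDiagonalisation.

(** * The frame *)

Section SymmetricDelta.
Variables (R : rcfType) (m : nat).
Implicit Types (e f : 'I_m * 'I_m) (M : 'M[R]_m).

Definition sym_delta_mx e : 'M[R]_m :=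
  (Num.sqrt 2)^-1 *: (delta_mx e.1 e.2 + delta_mx e.2 e.1).

Lemma sym_delta_mxE e a b :
  sym_delta_mx e a b = (Num.sqrt 2)^-1 * (((a, b) == e)%:R + ((b, a) == e)%:R).
Proof. by case: e => p q; rewrite !mxE !xpair_eqE [(b == p) && _]andbC. Qed.

Lemma tr_sym_delta_mx e : (sym_delta_mx e)^T = sym_delta_mx e.
Proof. by rewrite linearZ /= linearD /= !trmx_delta addrC. Qed.

Lemma mxtrace_delta_mul a b M : \tr (delta_mx a b *m M) = M b a.
Proof.
rewrite /mxtrace (bigD1 a) //= big1 ?addr0 => [|c ca].
  rewrite mxE (bigD1 b) //= big1 ?addr0 => [|d db].
    by rewrite mxE !eqxx mul1r.
  by rewrite mxE (negPf db) andbF mul0r.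
by rewrite mxE big1 // => d _; rewrite mxE (negPf ca) mul0r.
Qed.

Lemma mxtrace_sym_delta_mul e M :
  \tr (sym_delta_mx e *m M) = (Num.sqrt 2)^-1 * (M e.2 e.1 + M e.1 e.2).
Proof.
by rewrite -scalemxAl mxtraceZ mulmxDl mxtraceD !mxtrace_delta_mul.
Qed.

Lemma mxtrace_sym_delta e : e.1 != e.2 -> \tr (sym_delta_mx e) = 0.
Proof.
by move=> e12; rewrite -[sym_delta_mx e]mulmx1 mxtrace_sym_delta_mul !mxE
  eq_sym (negPf e12) addr0 mulr0.
Qed.

Lemma mxtrace_sym_delta_mul_sym_delta e f : e.1 != e.2 ->
  \tr (sym_delta_mx e *m sym_delta_mx f) = (same_edge e f)%:R.
Proof.
move=> e12; rewrite mxtrace_sym_delta_mul !sym_delta_mxE -!surjective_pairing.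
have s2 : (Num.sqrt 2)^-1 * ((Num.sqrt 2)^-1 * 2) = 1 :> R.
  by rewrite mulrA -expr2 exprVn sqr_sqrtr // mulVf // pnatr_eq0.
rewrite /same_edge; set s := (Num.sqrt 2)^-1 in s2 *.
have [<-|ef] := eqVneq e f.
  have -> : ((e.2, e.1) == e) = false.
    by case: e e12 => p q /= pq; rewrite xpair_eqE eq_sym (negPf pq).
  by rewrite -[RHS]s2 /=; ring.
by case: ((e.2, e.1) == f); rewrite -?[RHS]s2 /=; ring.
Qed.

End SymmetricDelta.

Arguments sym_delta_mx {R m}.

Lemma diag_comm_mx_offdiag (F : idomainType) m (D Y : 'M[F]_m) p q :
  is_diag_mx D -> Y *m D = D *m Y -> D p p != D q q -> Y p q = 0.
Proof.
move=> /is_diag_mxP Ddiag /matrixP/(_ p q); rewrite !mxE.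
rewrite (bigD1 q) // big1 /= => [|c cq]; last by rewrite Ddiag ?mulr0.
rewrite (bigD1 p) // big1 /= => [|c cp]; last by rewrite Ddiag ?mul0r // eq_sym.
rewrite !addr0 mulrC => /eqP; rewrite -subr_eq0 -mulrBl mulf_eq0 subr_eq0.
by move=> /orP[/eqP|/eqP //] -> /[!eqxx].
Qed.

Lemma diag_congr_row_free (F : fieldType) m r (U : 'M[F]_m)
    (vs : r.-tuple 'M[F]_m) :
  U \in unitmx -> free vs -> (forall i, is_diag_mx (U *m tnth vs i *m U^T)) ->
  row_free (\matrix_(i, a) (U *m tnth vs i *m U^T) a a).
Proof.
move=> Uu /freeP freeV Vdiag; apply: inj_row_free => v vD0.
have sum0 : U *m (\sum_i v 0 i *: vs`_i) *m U^T = 0.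
  rewrite mulmx_sumr mulmx_suml; apply/matrixP => a b.
  rewrite summxE mxE (eq_bigr (fun i => v 0 i * (U *m tnth vs i *m U^T) a b)).
    have [<-|ab] := eqVneq a b; last first.
      rewrite big1 // => i _.
      by move/is_diag_mxP: (Vdiag i) => -> //; rewrite mulr0.
    transitivity ((v *m \matrix_(i, a) (U *m tnth vs i *m U^T) a a) 0 a).
      by rewrite mxE; apply: eq_bigr => i _; rewrite mxE.
    by rewrite vD0 mxE.
  by move=> i _; rewrite -scalemxAr -scalemxAl mxE -tnth_nth.
apply/rowP => i; rewrite mxE; apply: freeV.
have UTu : U^T \in unitmx by rewrite unitmx_tr.
by rewrite -[LHS](mulKmx Uu) -[X in _ *m X](mulmxK UTu) sum0 mul0mx mulmx0.
Qed.

Section Congruence.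
Variables (R : realType) (m : nat) (P U : 'M[R]_m).
Hypothesis UPU : U *m P *m U^T = 1%:M.
Local Notation T := (invmx U).

Lemma unitmx_congr_id : U \in unitmx /\ P \in unitmx.
Proof.
by have [] := mulmx1_unit UPU; rewrite unitmx_mul unitmx_tr => /andP[].
Qed.

Lemma invmx_congr_id : invmx P = U^T *m U.
Proof.
have [_ Pu] := unitmx_congr_id.
have PUU : P *m (U^T *m U) = 1%:M.
  by rewrite mulmxA; apply: mulmx1C; rewrite mulmxA.
by rewrite -[RHS](mulKmx Pu) PUU mulmx1.
Qed.

Let UT : U *m T = 1%:M := mulmxV unitmx_congr_id.1.
Let TU : T^T *m U^T = 1%:M.
Proof. by rewrite -trmx_mul UT trmx1. Qed.

Lemma congr_idK E : U *m (T *m E *m T^T) *m U^T = E.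
Proof. by rewrite !mulmxA UT mul1mx -mulmxA TU mulmx1. Qed.

Lemma SLSO_metric_congr_id E W :
  SLSO_metric P (T *m E *m T^T) W = \tr (E *m (U *m W *m U^T)).
Proof.
rewrite /SLSO_metric invmx_congr_id -!mulmxA (mulmxA U T) UT mul1mx.
by rewrite (mulmxA T^T U^T) TU mul1mx mxtrace_mulC !mulmxA.
Qed.

Lemma SLSO_tangent_congr_id E :
  E^T = E -> \tr E = 0 -> SLSO_tangent P (T *m E *m T^T).
Proof.
move=> symE trE0; split; first by rewrite /symmx !trmx_mul trmxK symE mulmxA.
rewrite invmx_congr_id -!mulmxA (mulmxA U T) UT mul1mx mxtrace_mulC -mulmxA.
by rewrite TU mulmx1.
Qed.

Lemma congr_id_comm V W : V *m invmx P *m W = W *m invmx P *m V ->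
  (U *m V *m U^T) *m (U *m W *m U^T) = (U *m W *m U^T) *m (U *m V *m U^T).
Proof.
have e X Y : (U *m X *m U^T) *m (U *m Y *m U^T) =
             U *m (X *m (U^T *m U) *m Y) *m U^T.
  by rewrite !mulmxA.
by rewrite invmx_congr_id !e => ->.
Qed.

End Congruence.

Lemma SLSO_stab_comm (R : realType) m (P k V W : 'M[R]_m) : P \in unitmx ->
  SLSO_stab P k -> SLSO_act k V = V ->
  W *m invmx P *m V = V *m invmx P *m W ->
  SLSO_act k W *m invmx P *m V = V *m invmx P *m SLSO_act k W.
Proof.
rewrite /SLSO_act => Pu [detk kPk] kVk WV.
have ku : k \in unitmx by rewrite unitmxE detk unitr1.
have kTu : k^T \in unitmx by rewrite unitmx_tr.
have kTPk : k^T *m invmx P *m k = invmx P.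
  have kP : k *m P = P *m invmx k^T by rewrite -[in RHS]kPk mulmxK.
  rewrite -[RHS]mul1mx; apply: (canRL (mulmxK Pu)).
  by rewrite -(mulmxA _ k P) kP mulmxA mulmxKV // mulmxV.
have e X Y : k *m X *m k^T *m invmx P *m (k *m Y *m k^T) =
             k *m (X *m (k^T *m invmx P *m k) *m Y) *m k^T.
  by rewrite !mulmxA.
by rewrite -{1}kVk -[in RHS]kVk !e kTPk WV.
Qed.

Lemma SLSO_abelian_congr_diag (R : realType) m (P : 'M[R]_m) F r
    (vs : r.-tuple 'M[R]_m) :
  posdefmx P -> SLSO_abelian P F -> {subset vs <= F} ->
  exists U : 'M[R]_m,
    U *m P *m U^T = 1%:M /\ forall i, is_diag_mx (U *m tnth vs i *m U^T).
Proof.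
move=> posP [tangF commF] vsF.
have [|U [UPU Udiag]] := @simultaneous_congruence_diag R m P vs.
  by split=> // [V /vsF/tangF[] //|V W /vsF VF /vsF WF]; apply: commF.
by exists U; split=> // i; apply/Udiag/mem_tnth.
Qed.

Lemma SLSO_separating_edges (R : realType) n (P U : 'M[R]_n.+1) r
    (vs : r.-tuple 'M[R]_n.+1) :
  (5 <= n)%N -> free vs -> (forall i, SLSO_tangent P (tnth vs i)) ->
  U *m P *m U^T = 1%:M -> (forall i, is_diag_mx (U *m tnth vs i *m U^T)) ->
  exists pq : 'I_r -> 'I_3 -> 'I_n.+1 * 'I_n.+1,
    (forall i c, (U *m tnth vs i *m U^T) (pq i c).1 (pq i c).1 !=
                 (U *m tnth vs i *m U^T) (pq i c).2 (pq i c).2) /\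
    (forall i c j d, same_edge (pq i c) (pq j d) -> (i == j) && (c == d)).
Proof.
move=> n5 freeV tangV UPU Ddiag; have [Uu _] := unitmx_congr_id UPU.
have [|pq [separate distinct]] :=
  three_separating_edge_families n5 (diag_congr_row_free Uu freeV Ddiag).
  move=> i; under eq_bigr do rewrite mxE.
  change (\tr (U *m tnth vs i *m U^T) = 0).
  by rewrite mxtrace_mulC mulmxA -(invmx_congr_id UPU); apply: (tangV i).2.
by exists pq; split=> // i c; have := separate i c; rewrite !mxE.
Qed.

Theorem proposition11p1 (R : realType) (n : nat) :
  (5 <= n)%N -> property_E_SLSO R n.+1.
Proof.
move=> n5 P [posP _] F [abF _] vs basisF; have [tangF commF] := abF.
have vsF i : tnth vs i \in F := basis_mem basisF (mem_tnth i vs).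
have [U [UPU Ddiag]] :=
  SLSO_abelian_congr_diag posP abF (fun _ => basis_mem basisF).
have [pq [separate distinct]] := SLSO_separating_edges n5 (basis_free basisF)
  (fun i => tangF _ (vsF i)) UPU Ddiag.
have [_ Pu] := unitmx_congr_id UPU.
have proper i c : (pq i c).1 != (pq i c).2.
  by apply: contraNneq (separate i c) => ->.
exists (fun i c => invmx U *m sym_delta_mx (pq i c) *m (invmx U)^T); split.
- move=> i c; apply: (SLSO_tangent_congr_id UPU); first exact: tr_sym_delta_mx.
  exact: mxtrace_sym_delta.
- move=> i a j b; rewrite (SLSO_metric_congr_id UPU) (congr_idK UPU).
  rewrite mxtrace_sym_delta_mul_sym_delta //.
  have [/andP[/eqP <- /eqP <-]|ne] := boolP ((i == j) && (a == b)).
    by rewrite /same_edge eqxx.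
  by rewrite (negPf (contra (distinct i a j b) ne)).
- move=> i a k W stab kvs WF.
  rewrite (SLSO_metric_congr_id UPU) mxtrace_sym_delta_mul.
  have kWvs := SLSO_stab_comm Pu stab kvs (commF _ _ WF (vsF i)).
  have comm := congr_id_comm UPU kWvs.
  have sep := separate i a.
  by rewrite !(diag_comm_mx_offdiag (Ddiag i) comm) ?addr0 ?mulr0 // eq_sym.
Qed.
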